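(* Assume $c+\kappa>0$. (a) $R(\hat t_XX)R(\hat t_YY)$ and $R(\hat t_YY)R(\hat t_XX)$ are both rotations by angle $\pi$ (and their axes are orthogonal to $W_+$). (b) For all $t\in\mathbb R$: $R(\hat t_XX)R(\hat t_YY)=R(-\hat t_YY)R(-\hat t_XX)$, $R(\hat t_YY)R(\hat t_XX)=R(-\hat t_XX)R(-\hat t_YY)$, $R(\hat t_YY)R(\hat t_XX)R(tW_+)=R(-tW_+)R(\hat t_YY)R(\hat t_XX)$, $R(\hat t_XX)R(\hat t_YY)R(-tW_+)=R(tW_+)R(\hat t_XX)R(\hat t_YY)$. (c) If $\kappa=0$, then $R(\pi Y)R(tW_+)=R(-tW_+)R(\pi Y)$ for all $t\in\mathbb R$.
   Context: Fix unit vectors $X,Y\in\mathbb R^3$ with angle $\alpha\in(0,\pi/2]$, $c=\cos\alpha\in[0,1)$, and $\kappa\in[0,1]$. For a unit vector $v$, $R(tv)$ is rotation by angle $t$ about $v$ (counterclockwise viewed from the tip); for nonzero non-unit $v$, $R(tv):=R((t|v|)v/|v|)$. $W_+=(1+\kappa c)X-(\kappa+c)Y$. When $c+\kappa>0$: $\hat t_X=\arccos\frac{c-\kappa}{c+\kappa}$ and $\hat t_Y=\arccos\left(-\frac{1-\kappa c}{1+\kappa c}\right)$, both in $[0,\pi]$. *)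

From Stdlib Require Import Reals Lra.
Open Scope R_scope.

Record vec3 := V3 { vx : R; vy : R; vz : R }.
Record mat3 := M3 { a11 : R; a12 : R; a13 : R;
                    a21 : R; a22 : R; a23 : R;
                    a31 : R; a32 : R; a33 : R }.

Definition dot (u v : vec3) : R := vx u * vx v + vy u * vy v + vz u * vz v.
Definition vnorm (v : vec3) : R := sqrt (dot v v).
Definition vscale (k : R) (v : vec3) : vec3 := V3 (k * vx v) (k * vy v) (k * vz v).
Definition vadd (u v : vec3) : vec3 := V3 (vx u + vx v) (vy u + vy v) (vz u + vz v).
Definition vsub (u v : vec3) : vec3 := V3 (vx u - vx v) (vy u - vy v) (vz u - vz v).

Definition mmul (A B : mat3) : mat3 :=
  M3 (a11 A * a11 B + a12 A * a21 B + a13 A * a31 B)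
     (a11 A * a12 B + a12 A * a22 B + a13 A * a32 B)
     (a11 A * a13 B + a12 A * a23 B + a13 A * a33 B)
     (a21 A * a11 B + a22 A * a21 B + a23 A * a31 B)
     (a21 A * a12 B + a22 A * a22 B + a23 A * a32 B)
     (a21 A * a13 B + a22 A * a23 B + a23 A * a33 B)
     (a31 A * a11 B + a32 A * a21 B + a33 A * a31 B)
     (a31 A * a12 B + a32 A * a22 B + a33 A * a32 B)
     (a31 A * a13 B + a32 A * a23 B + a33 A * a33 B).

(* Rot t u : rotation by angle t about the unit vector u, counterclockwise
   viewed from the tip of u (right-hand rule), given by Rodrigues' formula
   cos t I + sin t [u]_x + (1 - cos t) u u^T.  This is R(t u) for unit u. *)
Definition Rot (t : R) (u : vec3) : mat3 :=
  let x := vx u in let y := vy u in let z := vz u in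
  let C := cos t in let S := sin t in let D := 1 - C in
  M3 (C + D * x * x)     (D * x * y - S * z) (D * x * z + S * y)
     (D * y * x + S * z) (C + D * y * y)     (D * y * z - S * x)
     (D * z * x - S * y) (D * z * y + S * x) (C + D * z * z).

(* R(t v) for a nonzero, not necessarily unit v: R((t|v|) v/|v|). *)
Definition Rv (t : R) (v : vec3) : mat3 := Rot (t * vnorm v) (vscale (/ vnorm v) v).

Definition Wplus (kappa c : R) (X Y : vec3) : vec3 :=
  vsub (vscale (1 + kappa * c) X) (vscale (kappa + c) Y).

Definition that_X (kappa c : R) : R := acos ((c - kappa) / (c + kappa)).
Definition that_Y (kappa c : R) : R := acos (- ((1 - kappa * c) / (1 + kappa * c))).

From Stdlib Require Import Reals Lra.
Open Scope R_scope.

(* Represent rotations by unit quaternions: [Rot t u] is the matrix of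
   [v |-> q v q^*] for [q = cos (t/2) + sin (t/2) u].  With
   [cX = cos (t̂X/2)], [sX = sin (t̂X/2)] and likewise for Y, the choice of
   t̂X, t̂Y is exactly what makes [cX cY = c sX sY] and [cY sX = kappa cX sY].
   The first relation kills the real part of the product quaternion, so the
   product of the two rotations is a half-turn; the second makes its axis
   orthogonal to W_+.  A half-turn is an involution, which gives the first
   two identities of (b), and a half-turn about an axis orthogonal to w
   conjugates R(s w) into R(-s w), which gives the others. *)

Record quat := Q { qw : R; qx : R; qy : R; qz : R }.

Definition qmul (p q : quat) : quat :=
  Q (qw p * qw q - qx p * qx q - qy p * qy q - qz p * qz q)
    (qw p * qx q + qx p * qw q + qy p * qz q - qz p * qy q)
    (qw p * qy q - qx p * qz q + qy p * qw q + qz p * qx q)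
    (qw p * qz q + qx p * qy q - qy p * qx q + qz p * qw q).

Definition qconj (q : quat) : quat := Q (qw q) (- qx q) (- qy q) (- qz q).

Definition qnorm2 (q : quat) : R := qw q * qw q + qx q * qx q + qy q * qy q + qz q * qz q.

Definition qv (q : quat) : vec3 := V3 (qx q) (qy q) (qz q).

Definition qof (a b : R) (u : vec3) : quat := Q a (b * vx u) (b * vy u) (b * vz u).

Definition qrot (t : R) (u : vec3) : quat := qof (cos (t / 2)) (sin (t / 2)) u.

(* The matrix of [v |-> q v q^*]; it is a rotation when [qnorm2 q = 1]. *)
Definition Mq (q : quat) : mat3 :=
  let n := qw q * qw q - (qx q * qx q + qy q * qy q + qz q * qz q) in
  M3 (n + 2 * qx q * qx q) (2 * qx q * qy q - 2 * qw q * qz q) (2 * qx q * qz q + 2 * qw q * qy q)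
     (2 * qy q * qx q + 2 * qw q * qz q) (n + 2 * qy q * qy q) (2 * qy q * qz q - 2 * qw q * qx q)
     (2 * qz q * qx q - 2 * qw q * qy q) (2 * qz q * qy q + 2 * qw q * qx q) (n + 2 * qz q * qz q).

Lemma mmul_assoc (A B C : mat3) : mmul (mmul A B) C = mmul A (mmul B C).
Proof. destruct A, B, C; unfold mmul; simpl; f_equal; ring. Qed.

Lemma Mq_qmul (p q : quat) : mmul (Mq p) (Mq q) = Mq (qmul p q).
Proof. destruct p, q; unfold Mq, qmul, mmul; simpl; f_equal; ring. Qed.

Lemma qconj_qmul (p q : quat) : qconj (qmul p q) = qmul (qconj q) (qconj p).
Proof. destruct p, q; unfold qconj, qmul; simpl; f_equal; ring. Qed.

Lemma qnorm2_qmul (p q : quat) : qnorm2 (qmul p q) = qnorm2 p * qnorm2 q.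
Proof. destruct p, q; unfold qnorm2, qmul; simpl; ring. Qed.

Lemma qw_qmulC (p q : quat) : qw (qmul p q) = qw (qmul q p).
Proof. destruct p, q; simpl; ring. Qed.

Lemma Mq_qconj_pure (q : quat) : qw q = 0 -> Mq (qconj q) = Mq q.
Proof. destruct q as [w x y z]; simpl; intros ->; unfold Mq; simpl; f_equal; ring. Qed.

Lemma dot_qv_pure (q : quat) : qw q = 0 -> dot (qv q) (qv q) = qnorm2 q.
Proof. destruct q as [w x y z]; simpl; intros ->; unfold dot, qnorm2; simpl; ring. Qed.

Lemma qrot_opp (t : R) (u : vec3) : qrot (- t) u = qconj (qrot t u).
Proof.
  unfold qrot, qof, qconj; simpl.
  replace (- t / 2) with (- (t / 2)) by field.
  rewrite cos_neg, sin_neg; f_equal; ring.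
Qed.

Lemma qnorm2_qrot (t : R) (u : vec3) : dot u u = 1 -> qnorm2 (qrot t u) = 1.
Proof.
  intro hu; pose proof (sin2_cos2 (t / 2)) as hcs; unfold Rsqr in hcs.
  unfold qnorm2, qrot, qof; simpl.
  transitivity (cos (t / 2) * cos (t / 2) + sin (t / 2) * sin (t / 2) * dot u u);
    [unfold dot; ring | rewrite hu; lra].
Qed.

Lemma Rot_qrot (t : R) (u : vec3) : dot u u = 1 -> Rot t u = Mq (qrot t u).
Proof.
  destruct u as [x y z]; unfold dot; simpl; intro hu.
  pose proof (sin2_cos2 (t / 2)) as hcs; unfold Rsqr in hcs.
  set (C := cos (t / 2)) in *; set (S := sin (t / 2)) in *.
  assert (hcos : cos t = C * C - S * S)
    by (replace t with (2 * (t / 2)) by field; apply cos_2a).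
  assert (hsin : sin t = 2 * S * C)
    by (replace t with (2 * (t / 2)) by field; apply sin_2a).
  assert (hS : S * x * (S * x) + S * y * (S * y) + S * z * (S * z) = S * S)
    by (transitivity (S * S * (x * x + y * y + z * z)); [ring | rewrite hu; ring]).
  unfold Rot, Mq, qrot, qof; simpl; fold C S.
  rewrite hcos, hsin, hS.
  replace (1 - (C * C - S * S)) with (2 * (S * S)) by lra.
  f_equal; ring.
Qed.

Lemma Rot_mul_Mq (t s : R) (u v : vec3) : dot u u = 1 -> dot v v = 1 ->
  mmul (Rot t u) (Rot s v) = Mq (qmul (qrot t u) (qrot s v)).
Proof. intros hu hv; rewrite (Rot_qrot t u hu), (Rot_qrot s v hv); apply Mq_qmul. Qed.

Lemma Rot_PI_qv (p : quat) : qw p = 0 -> qnorm2 p = 1 -> Rot PI (qv p) = Mq p.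
Proof.
  intros hw hn; rewrite Rot_qrot by (rewrite dot_qv_pure; assumption).
  unfold qrot, qof; rewrite cos_PI2, sin_PI2.
  destruct p as [w x y z]; simpl in *; subst w; f_equal; f_equal; ring.
Qed.

(* A half-turn is its own inverse: if [Rot t u * Rot s v] is a half-turn,
   it equals its inverse [Rot (-s) v * Rot (-t) u]. *)
Lemma Rot_mul_half_turn_inv (t s : R) (u v : vec3) : dot u u = 1 -> dot v v = 1 ->
  qw (qmul (qrot t u) (qrot s v)) = 0 ->
  mmul (Rot t u) (Rot s v) = mmul (Rot (- s) v) (Rot (- t) u).
Proof.
  intros hu hv hw.
  rewrite !Rot_mul_Mq by assumption.
  rewrite !qrot_opp, <- qconj_qmul.
  symmetry; apply Mq_qconj_pure, hw.
Qed.

Lemma Rot_mul_half_turn (t s : R) (u v w : vec3) : dot u u = 1 -> dot v v = 1 ->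
  qw (qmul (qrot t u) (qrot s v)) = 0 -> dot (qv (qmul (qrot t u) (qrot s v))) w = 0 ->
  exists a : vec3, dot a a = 1 /\ dot a w = 0 /\ mmul (Rot t u) (Rot s v) = Rot PI a.
Proof.
  intros hu hv hw haw.
  set (p := qmul (qrot t u) (qrot s v)) in *.
  assert (hn : qnorm2 p = 1) by (unfold p; rewrite qnorm2_qmul, !qnorm2_qrot; auto; ring).
  exists (qv p); split; [rewrite dot_qv_pure; assumption|]; split; [assumption|].
  rewrite Rot_PI_qv by assumption; apply Rot_mul_Mq; assumption.
Qed.

(* Quaternion form of the conjugation: [a (c + s w) = (c - s w) a] for [a ⟂ w]. *)
Lemma Rot_PI_conj (a w : vec3) (s : R) : dot a a = 1 -> dot w w = 1 -> dot a w = 0 ->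
  mmul (Rot PI a) (Rot s w) = mmul (Rot (- s) w) (Rot PI a).
Proof.
  intros ha hw haw.
  rewrite !Rot_mul_Mq by assumption.
  rewrite qrot_opp; f_equal.
  unfold qrot, qof, qconj, qmul; rewrite cos_PI2, sin_PI2.
  destruct a as [a1 a2 a3], w as [w1 w2 w3]; unfold dot in haw; simpl in *.
  f_equal; try ring.
  apply Rminus_diag_uniq.
  transitivity (-2 * sin (s / 2) * (a1 * w1 + a2 * w2 + a3 * w3)); [ring|].
  rewrite haw; ring.
Qed.

Lemma dot_vscale_l (k : R) (u v : vec3) : dot (vscale k u) v = k * dot u v.
Proof. unfold dot, vscale; simpl; ring. Qed.

Lemma dot_vscale_r (k : R) (u v : vec3) : dot u (vscale k v) = k * dot u v.
Proof. unfold dot, vscale; simpl; ring. Qed.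

Lemma dot_normalize (W : vec3) : dot W W > 0 ->
  dot (vscale (/ vnorm W) W) (vscale (/ vnorm W) W) = 1.
Proof.
  intro hW.
  assert (hn : 0 < vnorm W) by (apply sqrt_lt_R0; lra).
  assert (hnn : vnorm W * vnorm W = dot W W) by (apply sqrt_sqrt; lra).
  rewrite dot_vscale_l, dot_vscale_r, <- hnn; field; lra.
Qed.

Lemma Rot_PI_conj_Rv (a W : vec3) (t : R) : dot a a = 1 -> dot W W > 0 -> dot a W = 0 ->
  mmul (Rot PI a) (Rv t W) = mmul (Rv (- t) W) (Rot PI a).
Proof.
  intros ha hW haW; unfold Rv.
  replace (- t * vnorm W) with (- (t * vnorm W)) by ring.
  apply Rot_PI_conj; [assumption | apply dot_normalize, hW |].
  rewrite dot_vscale_r, haW; ring.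
Qed.

Lemma dot_Wplus_l (k c : R) (X Y w : vec3) :
  dot (Wplus k c X Y) w = (1 + k * c) * dot X w - (k + c) * dot Y w.
Proof. unfold Wplus, dot, vsub, vscale; simpl; ring. Qed.

Section Configuration.

Variables (X Y : vec3) (c k : R).
Hypotheses (hX : dot X X = 1) (hY : dot Y Y = 1) (hXY : dot X Y = c).

Lemma dot_X_Wplus : dot X (Wplus k c X Y) = 1 - c * c.
Proof.
  replace (dot X (Wplus k c X Y)) with (dot (Wplus k c X Y) X) by (unfold dot; ring).
  rewrite dot_Wplus_l, hX.
  replace (dot Y X) with c by (rewrite <- hXY; unfold dot; ring); ring.
Qed.

Lemma dot_Y_Wplus : dot Y (Wplus k c X Y) = - (k * (1 - c * c)).
Proof.
  replace (dot Y (Wplus k c X Y)) with (dot (Wplus k c X Y) Y) by (unfold dot; ring).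
  rewrite dot_Wplus_l, hY, hXY; ring.
Qed.

Lemma dot_Wplus_pos : 0 <= c < 1 -> 0 <= k -> dot (Wplus k c X Y) (Wplus k c X Y) > 0.
Proof.
  intros hc hk.
  rewrite dot_Wplus_l.
  replace (dot X (Wplus k c X Y)) with (1 - c * c) by (symmetry; apply dot_X_Wplus).
  replace (dot Y (Wplus k c X Y)) with (- (k * (1 - c * c))) by (symmetry; apply dot_Y_Wplus).
  apply Rlt_gt.
  replace (_ - _) with ((1 - c * c) * (1 + 2 * k * c + k * k)) by ring.
  apply Rmult_lt_0_compat; nra.
Qed.

Variables (cX sX cY sY : R).
Hypotheses (hcos : cX * cY = c * sX * sY) (hsin : cY * sX = k * cX * sY).

Lemma qw_qmul_qof : qw (qmul (qof cX sX X) (qof cY sY Y)) = 0.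
Proof.
  transitivity (cX * cY - sX * sY * dot X Y); [unfold dot; simpl; ring|].
  rewrite hXY, hcos; ring.
Qed.

(* The cross-product part of the axis is orthogonal to W, which lies in span(X, Y). *)
Lemma dot_qv_qmul_qof_Wplus :
  dot (qv (qmul (qof cX sX X) (qof cY sY Y))) (Wplus k c X Y) = 0 /\
  dot (qv (qmul (qof cY sY Y) (qof cX sX X))) (Wplus k c X Y) = 0.
Proof.
  assert (E : cX * sY * dot Y (Wplus k c X Y) + sX * cY * dot X (Wplus k c X Y) = 0).
  { rewrite dot_X_Wplus, dot_Y_Wplus.
    transitivity ((1 - c * c) * (cY * sX - k * cX * sY)); [ring|].
    rewrite hsin; ring. }
  split; rewrite <- E; unfold Wplus, dot, qv, qof, qmul, vsub, vscale; simpl; ring.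
Qed.

End Configuration.

Lemma half_acos (r : R) : -1 <= r <= 1 ->
  0 <= cos (acos r / 2) /\ 0 <= sin (acos r / 2) /\
  cos (acos r / 2) * cos (acos r / 2) = (1 + r) / 2 /\
  sin (acos r / 2) * sin (acos r / 2) = (1 - r) / 2.
Proof.
  intro hr; pose proof (acos_bound r); pose proof PI_RGT_0.
  pose proof (cos_acos r hr) as hc.
  pose proof (sin2_cos2 (acos r / 2)) as hcs; unfold Rsqr in hcs.
  replace (acos r) with (2 * (acos r / 2)) in hc at 1 by field.
  rewrite cos_2a_cos in hc.
  repeat split; [apply cos_ge_0 | apply sin_ge_0 | |]; lra.
Qed.

(* With [cX² = c/(c+k)], [sX² = k/(c+k)], [cY² = kc/(1+kc)], [sY² = 1/(1+kc)],
   both relations hold after squaring, and all factors are nonnegative. *)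
Lemma half_angle_relations (c k : R) : 0 <= c -> 0 <= k -> c + k > 0 ->
  cos (that_X k c / 2) * cos (that_Y k c / 2) = c * sin (that_X k c / 2) * sin (that_Y k c / 2) /\
  cos (that_Y k c / 2) * sin (that_X k c / 2) = k * cos (that_X k c / 2) * sin (that_Y k c / 2).
Proof.
  intros hc hk hp.
  assert (hq : 1 + k * c > 0) by nra.
  assert (rX : -1 <= (c - k) / (c + k) <= 1).
  { assert ((c - k) / (c + k) * (c + k) = c - k) by (field; lra). split; nra. }
  assert (rY : -1 <= - ((1 - k * c) / (1 + k * c)) <= 1).
  { assert ((1 - k * c) / (1 + k * c) * (1 + k * c) = 1 - k * c) by (field; lra). split; nra. }
  destruct (half_acos _ rX) as [cX0 [sX0 [cX2 sX2]]].
  destruct (half_acos _ rY) as [cY0 [sY0 [cY2 sY2]]].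
  unfold that_X, that_Y.
  set (cX := cos (acos ((c - k) / (c + k)) / 2)) in *.
  set (sX := sin (acos ((c - k) / (c + k)) / 2)) in *.
  set (cY := cos (acos (- ((1 - k * c) / (1 + k * c))) / 2)) in *.
  set (sY := sin (acos (- ((1 - k * c) / (1 + k * c))) / 2)) in *.
  split; apply Rsqr_inj; unfold Rsqr; try (repeat apply Rmult_le_pos; lra).
  - transitivity (cX * cX * (cY * cY)); [ring|].
    transitivity (c * c * (sX * sX) * (sY * sY)); [|ring].
    rewrite cX2, cY2, sX2, sY2; field; lra.
  - transitivity (cY * cY * (sX * sX)); [ring|].
    transitivity (k * k * (cX * cX) * (sY * sY)); [|ring].
    rewrite cX2, cY2, sX2, sY2; field; lra.
Qed.

Theorem proposition4p5 (X Y : vec3) (alpha kappa : R)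
  (hX : dot X X = 1) (hY : dot Y Y = 1)
  (halpha : 0 < alpha <= PI / 2) (hXY : dot X Y = cos alpha)
  (hk : 0 <= kappa <= 1)
  (hpos : cos alpha + kappa > 0) :
  let c := cos alpha in
  let W := Wplus kappa c X Y in
  let tX := that_X kappa c in
  let tY := that_Y kappa c in
  (* (a) *)
  ((exists a : vec3, dot a a = 1 /\ dot a W = 0 /\
      mmul (Rot tX X) (Rot tY Y) = Rot PI a) /\
   (exists a : vec3, dot a a = 1 /\ dot a W = 0 /\
      mmul (Rot tY Y) (Rot tX X) = Rot PI a)) /\
  (* (b) *)
  (forall t : R,
     mmul (Rot tX X) (Rot tY Y) = mmul (Rot (- tY) Y) (Rot (- tX) X) /\
     mmul (Rot tY Y) (Rot tX X) = mmul (Rot (- tX) X) (Rot (- tY) Y) /\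
     mmul (mmul (Rot tY Y) (Rot tX X)) (Rv t W)
       = mmul (mmul (Rv (- t) W) (Rot tY Y)) (Rot tX X) /\
     mmul (mmul (Rot tX X) (Rot tY Y)) (Rv (- t) W)
       = mmul (mmul (Rv t W) (Rot tX X)) (Rot tY Y)) /\
  (* (c) *)
  (kappa = 0 -> forall t : R,
     mmul (Rot PI Y) (Rv t W) = mmul (Rv (- t) W) (Rot PI Y)).
Proof.
  intros c W tX tY.
  pose proof PI_RGT_0.
  assert (hc0 : 0 <= c) by (apply cos_ge_0; lra).
  assert (hc1 : c < 1).
  { pose proof (sin_gt_0 alpha ltac:(lra) ltac:(lra)).
    pose proof (sin2_cos2 alpha) as hsc; unfold Rsqr in hsc; fold c in hsc; nra. }
  assert (hWW : dot W W > 0) by (apply dot_Wplus_pos; auto; lra).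
  destruct (half_angle_relations c kappa hc0 ltac:(lra) hpos) as [hcos hsin].
  destruct (dot_qv_qmul_qof_Wplus X Y c kappa hX hY hXY _ _ _ _ hsin) as [hpW hqW].
  pose proof (qw_qmul_qof X Y c hXY _ _ _ _ hcos) as hpw.
  assert (hqw := hpw); rewrite qw_qmulC in hqw.
  destruct (Rot_mul_half_turn tX tY X Y W hX hY hpw hpW) as [a [ha [haW Ea]]].
  destruct (Rot_mul_half_turn tY tX Y X W hY hX hqw hqW) as [b [hb [hbW Eb]]].
  split; [split; eauto|]; split.
  - intro t; repeat split.
    + apply Rot_mul_half_turn_inv; assumption.
    + apply Rot_mul_half_turn_inv; assumption.
    + rewrite Eb, mmul_assoc, Eb; apply Rot_PI_conj_Rv; assumption.
    + rewrite Ea, mmul_assoc, Ea.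
      pose proof (Rot_PI_conj_Rv a W (- t) ha hWW haW) as E.
      rewrite Ropp_involutive in E; exact E.
  - intros hk0 t; apply Rot_PI_conj_Rv; try assumption.
    unfold W; rewrite dot_Y_Wplus by assumption; rewrite hk0; ring.
Qed.
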